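(* Let $m$ be an odd positive integer, let $r,s\in\mathbb{Z}$ with $2^{-1}+r^2+s^2\equiv0\pmod m$, and let $\tau:H_{1,2,2}/mH_{1,2,2}\to M_2(\mathbb{Z}/m\mathbb{Z})$ be the map defined as follows: writing $\mathbf{q}\equiv q_1+q_2\mathbf{i}+q_3\sqrt2\,\mathbf{j}+q_4\sqrt2\,\mathbf{k}\pmod{mH_{1,2,2}}$ with $q_i\in\mathbb{Z}$, $\tau(\mathbf{q})=\begin{pmatrix}q_1-2rq_3-2sq_4 & q_2-2sq_3+2rq_4\\ -q_2-2sq_3+2rq_4 & q_1+2rq_3+2sq_4\end{pmatrix}$ modulo $m$. Then $\mathbf{q}\in H_{1,2,2}$ is primitive to $m$ if and only if the matrix $\tau(\mathbf{q})$ is primitive to $m$.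
   Context: Let $\mathbf{i},\mathbf{j},\mathbf{k}$ be the standard quaternion units. $H_{1,2,2}$ is the subring of the quaternions equal to the $\mathbb{Z}$-module generated by $\mathbf{v}_1=1$, $\mathbf{v}_2=\mathbf{i}$, $\mathbf{v}_3=\tfrac12(1+\mathbf{i}+\sqrt2\,\mathbf{j})$, $\mathbf{v}_4=\tfrac12(1+\mathbf{i}+\sqrt2\,\mathbf{k})$. An element $\mathbf{g}=g_1\mathbf{v}_1+g_2\mathbf{v}_2+g_3\mathbf{v}_3+g_4\mathbf{v}_4$ ($g_i\in\mathbb{Z}$) is primitive to $m$ if $\gcd(g_1,g_2,g_3,g_4,m)=1$; this depends only on the class of $\mathbf{g}$ modulo $mH_{1,2,2}$. A matrix $\begin{pmatrix}\alpha&\beta\\\gamma&\delta\end{pmatrix}$ over $\mathbb{Z}/m\mathbb{Z}$ is primitive to $m$ if $\gcd(\alpha,\beta,\gamma,\delta,m)=1$. $2^{-1}$ denotes the inverse of $2$ modulo $m$. *)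

From HB Require Import structures.
From mathcomp Require Import all_boot all_order all_algebra.
Set Implicit Arguments. Unset Strict Implicit. Unset Printing Implicit Defensive.
Import Order.TTheory GRing.Theory Num.Theory.
Local Open Scope ring_scope.

(* Elements of Q(sqrt 2), represented exactly: (a, b) stands for a + b*sqrt 2. *)
Definition Q2 := (rat * rat)%type.
Definition q2add (x y : Q2) : Q2 := (x.1 + y.1, x.2 + y.2).
Definition q2scale (c : rat) (x : Q2) : Q2 := (c * x.1, c * x.2).
Definition q2zero : Q2 := (0, 0).

(* Quaternions with coefficients in Q(sqrt 2): x0 + x1 i + x2 j + x3 k. *)
Record quat := Quat { qc0 : Q2; qc1 : Q2; qc2 : Q2; qc3 : Q2 }.

Definition qadd (x y : quat) : quat :=
  Quat (q2add (qc0 x) (qc0 y)) (q2add (qc1 x) (qc1 y))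
       (q2add (qc2 x) (qc2 y)) (q2add (qc3 x) (qc3 y)).
Definition qscale (c : rat) (x : quat) : quat :=
  Quat (q2scale c (qc0 x)) (q2scale c (qc1 x)) (q2scale c (qc2 x)) (q2scale c (qc3 x)).
Definition qsub (x y : quat) : quat := qadd x (qscale (-1) y).
Definition qzscale (n : int) (x : quat) : quat := qscale (n%:~R) x.

Definition q_one : quat := Quat (1, 0) q2zero q2zero q2zero.
Definition q_i : quat := Quat q2zero (1, 0) q2zero q2zero.
Definition q_s2j : quat := Quat q2zero q2zero (0, 1) q2zero.
Definition q_s2k : quat := Quat q2zero q2zero q2zero (0, 1).

(* The Z-basis of H_{1,2,2}. *)
Definition v1 : quat := q_one.
Definition v2 : quat := q_i.
Definition v3 : quat := qscale (1 / 2) (qadd (qadd q_one q_i) q_s2j).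
Definition v4 : quat := qscale (1 / 2) (qadd (qadd q_one q_i) q_s2k).

Definition hcomb (g1 g2 g3 g4 : int) : quat :=
  qadd (qadd (qadd (qzscale g1 v1) (qzscale g2 v2)) (qzscale g3 v3)) (qzscale g4 v4).

Definition in_mH (m : nat) (x : quat) : Prop :=
  exists h1 h2 h3 h4 : int, x = qzscale m%:Z (hcomb h1 h2 h3 h4).

Definition qexpr (q1 q2 q3 q4 : int) : quat :=
  qadd (qadd (qadd (qzscale q1 q_one) (qzscale q2 q_i)) (qzscale q3 q_s2j))
       (qzscale q4 q_s2k).

Definition primitive_H (m : nat) (g1 g2 g3 g4 : int) : Prop :=
  gcdz (gcdz (gcdz (gcdz g1 g2) g3) g4) m%:Z = 1.

(* A 2x2 matrix over Z/mZ, given by integer representatives of its entries,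
   is primitive to m iff gcd(alpha,beta,gamma,delta,m) = 1
   (independent of the chosen representatives). *)
Definition primitive_mx (m : nat) (A : 'M[int]_2) : Prop :=
  gcdz (gcdz (gcdz (gcdz (A 0 0) (A 0 1)) (A 1 0)) (A 1 1)) m%:Z = 1.

Definition tau (r s q1 q2 q3 q4 : int) : 'M[int]_2 :=
  \matrix_(a < 2, b < 2)
    if a == 0 then
      (if b == 0 then q1 - 2 * r * q3 - 2 * s * q4 else q2 - 2 * s * q3 + 2 * r * q4)
    else
      (if b == 0 then - q2 - 2 * s * q3 + 2 * r * q4 else q1 + 2 * r * q3 + 2 * s * q4).

(* 2^{-1} modulo an odd m: the integer (m+1)/2 *)
Definition inv2 (m : nat) : int := (m.+1./2)%:Z.

From mathcomp Require Import all_boot all_order all_algebra ring lra zify.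
Set Implicit Arguments. Unset Strict Implicit. Unset Printing Implicit Defensive.
Import Order.TTheory GRing.Theory Num.Theory.
Local Open Scope ring_scope.

(* Modulo m, the coordinates (g1, ..., g4) of q in the basis v1, ..., v4, its
   coordinates (q1, ..., q4) in the basis 1, i, sqrt2 j, sqrt2 k, and the four
   entries of tau(q) are integer linear combinations of one another: passing
   between g and q only needs 1/2 mod m, and inverting tau uses
   r^2 + s^2 = -1/2 mod m.  Such mutual substitutions preserve the ideal generated by the entries and m,
   hence their gcd with m. *)

Lemma in_mH_hcomb_sub_qexpr (m : nat) (g1 g2 g3 g4 q1 q2 q3 q4 : int) :
  in_mH m (qsub (hcomb g1 g2 g3 g4) (qexpr q1 q2 q3 q4)) ->
  exists h1 h2 h3 h4 : int,
    [/\ g1 = q1 - q3 - q4 + m%:Z * h1, g2 = q2 - q3 - q4 + m%:Z * h2,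
        g3 = 2 * q3 + m%:Z * h3 & g4 = 2 * q4 + m%:Z * h4].
Proof.
case=> h1 [h2 [h3 [h4]]]; rewrite /qsub /qadd /qexpr /hcomb /qzscale /qscale.
rewrite /q2add /q2scale /v1 /v2 /v3 /v4 /q_one /q_i /q_s2j /q_s2k /q2zero /=.
case=> E1 _ E2 _ _ E3 _ E4; exists h1, h2, h3, h4.
have e3 : g3 = 2 * q3 + m%:Z * h3.
  by apply: (@intr_inj rat); rewrite !rmorphD !rmorphM /=; lra.
have e4 : g4 = 2 * q4 + m%:Z * h4.
  by apply: (@intr_inj rat); rewrite !rmorphD !rmorphM /=; lra.
split=> //; apply: (@intr_inj rat); move: E1 E2;
  rewrite e3 e4 !(rmorphD, rmorphB, rmorphM) /=; lra.
Qed.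

Lemma inv2_spec (m : nat) : odd m -> 2 * inv2 m = m%:Z + 1.
Proof. by move=> m_odd; have := odd_double_half m.+1; rewrite /= m_odd /inv2; lia. Qed.

Definition gcdz5 (x1 x2 x3 x4 m : int) : int :=
  gcdz (gcdz (gcdz (gcdz x1 x2) x3) x4) m.

Definition zcomb_mod (m x1 x2 x3 x4 y : int) : Prop :=
  exists a1 a2 a3 a4 b : int, y = a1 * x1 + a2 * x2 + a3 * x3 + a4 * x4 + b * m.

Lemma dvdz_gcdz5 (p x1 x2 x3 x4 m : int) :
  (p %| gcdz5 x1 x2 x3 x4 m)%Z =
  [&& (p %| x1)%Z, (p %| x2)%Z, (p %| x3)%Z, (p %| x4)%Z & (p %| m)%Z].
Proof. by rewrite /gcdz5 !dvdz_gcd !andbA. Qed.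

Lemma dvdz_gcdz5_zcomb (m x1 x2 x3 x4 y : int) :
  zcomb_mod m x1 x2 x3 x4 y -> (gcdz5 x1 x2 x3 x4 m %| y)%Z.
Proof.
case=> a1 [a2 [a3 [a4 [b ->]]]].
have := dvdz_gcdz5 (gcdz5 x1 x2 x3 x4 m) x1 x2 x3 x4 m.
rewrite dvdzz => /esym/and5P[d1 d2 d3 d4 dm].
by rewrite !rpredD ?dvdz_mull.
Qed.

Lemma gcdz5_eq1_zcomb (m x1 x2 x3 x4 y1 y2 y3 y4 : int) :
  zcomb_mod m x1 x2 x3 x4 y1 -> zcomb_mod m x1 x2 x3 x4 y2 ->
  zcomb_mod m x1 x2 x3 x4 y3 -> zcomb_mod m x1 x2 x3 x4 y4 ->
  gcdz5 y1 y2 y3 y4 m = 1 -> gcdz5 x1 x2 x3 x4 m = 1.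
Proof.
move=> c1 c2 c3 c4 gy1.
have : (gcdz5 x1 x2 x3 x4 m %| gcdz5 y1 y2 y3 y4 m)%Z.
  by rewrite dvdz_gcdz5 dvdz_gcdr andbT; apply/and4P; split; exact: dvdz_gcdz5_zcomb.
by rewrite gy1 dvdz1 /gcdz5 /gcdz /= => /eqP ->.
Qed.

Lemma subr_eq_mul0 (R : pzRingType) (x y c e : R) : e = 0 -> x - y = c * e -> x = y.
Proof. by move=> -> /eqP; rewrite mulr0 subr_eq0 => /eqP. Qed.

Section ChangeOfCoordinates.

Variables (m w : int).
Hypothesis w_half : 2 * w = m + 1.

Lemma gcdz5_eq1_hcomb_coords (q1 q2 q3 q4 h1 h2 h3 h4 : int) :
  gcdz5 (q1 - q3 - q4 + m * h1) (q2 - q3 - q4 + m * h2)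
        (2 * q3 + m * h3) (2 * q4 + m * h4) m = 1 <->
  gcdz5 q1 q2 q3 q4 m = 1.
Proof.
have -> : m = 2 * w - 1 by rewrite w_half; ring.
split; apply: gcdz5_eq1_zcomb.
- by exists 1, 0, (-1), (-1), h1; ring.
- by exists 0, 1, (-1), (-1), h2; ring.
- by exists 0, 0, 2, 0, h3; ring.
- by exists 0, 0, 0, 2, h4; ring.
- by exists 1, 0, w, w, (- (h1 + q3 + w * h3 + q4 + w * h4)); ring.
- by exists 0, 1, w, w, (- (h2 + q3 + w * h3 + q4 + w * h4)); ring.
- by exists 0, 0, w, 0, (- q3 - w * h3); ring.
- by exists 0, 0, 0, w, (- q4 - w * h4); ring.
Qed.

Variables (k r s : int).
Hypothesis rs_sum : w + r ^+ 2 + s ^+ 2 = k * m.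

(* With (a, b, c, d) the entries of tau(q), modulo m:
   q1 = w (a + d), q2 = w (b - c), q3 = w (r (a - d) + s (b + c)),
   q4 = w (s (a - d) - r (b + c)). *)
Lemma gcdz5_eq1_tau_coords (q1 q2 q3 q4 : int) :
  gcdz5 q1 q2 q3 q4 m = 1 <->
  gcdz5 (q1 - 2 * r * q3 - 2 * s * q4) (q2 - 2 * s * q3 + 2 * r * q4)
        (- q2 - 2 * s * q3 + 2 * r * q4) (q1 + 2 * r * q3 + 2 * s * q4) m = 1.
Proof.
have rs_rel : w + r ^+ 2 + s ^+ 2 - k * m = 0 by rewrite rs_sum subrr.
have m_def : m = 2 * w - 1 by rewrite w_half; ring.
rewrite m_def in rs_rel *.
split; apply: gcdz5_eq1_zcomb.
- by exists w, 0, 0, w, (- q1); ring.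
- by exists 0, w, (- w), 0, (- q2); ring.
- exists (w * r), (w * s), (w * s), (- (w * r)), (w * (4 * k - 2) * q3 - q3).
  by apply: (subr_eq_mul0 (c := 4 * w * q3) rs_rel); ring.
- exists (w * s), (- (w * r)), (- (w * r)), (- (w * s)), (w * (4 * k - 2) * q4 - q4).
  by apply: (subr_eq_mul0 (c := 4 * w * q4) rs_rel); ring.
- by exists 1, 0, (- 2 * r), (- 2 * s), 0; ring.
- by exists 0, 1, (- 2 * s), (2 * r), 0; ring.
- by exists 0, (- 1), (- 2 * s), (2 * r), 0; ring.
- by exists 1, 0, (2 * r), (2 * s), 0; ring.
Qed.

End ChangeOfCoordinates.

Theorem theorem30 (m : nat) (r s : int) :
  odd m -> (0 < m)%N ->
  (inv2 m + r ^+ 2 + s ^+ 2 = 0 %[mod m%:Z])%Z ->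
  forall (g1 g2 g3 g4 q1 q2 q3 q4 : int),
    in_mH m (qsub (hcomb g1 g2 g3 g4) (qexpr q1 q2 q3 q4)) ->
    (primitive_H m g1 g2 g3 g4 <-> primitive_mx m (tau r s q1 q2 q3 q4)).
Proof.
move=> m_odd _ rs_mod g1 g2 g3 g4 q1 q2 q3 q4.
case/in_mH_hcomb_sub_qexpr=> h1 [h2 [h3 [h4 [-> -> -> ->]]]].
have w_half := inv2_spec m_odd.
have rs_sum : inv2 m + r ^+ 2 + s ^+ 2 = ((inv2 m + r ^+ 2 + s ^+ 2) %/ m)%Z * m.
  by rewrite {1}(divz_eq (inv2 m + r ^+ 2 + s ^+ 2) m) rs_mod mod0z addr0.
rewrite /primitive_mx !mxE /=.
exact: iff_trans (gcdz5_eq1_hcomb_coords w_half _ _ _ _ _ _ _ _)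
                 (gcdz5_eq1_tau_coords w_half rs_sum _ _ _ _).
Qed.
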